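(* Let $p=0\in\mathbb{R}^2$ and for a function $u$ set $M_u(r)=\max_{|x|\le r}|u(x)|$. Let $\alpha\in(0,1)$, and suppose that for given $k>0$ and $r>0$ there is a constant $C(k,r,\alpha)$ such that every solution $u$ of the Helmholtz equation $\Delta u+k^2u=0$ on $\mathbb{R}^2$ satisfies \[M_u(2r)\le C(k,r,\alpha)\,M_u(r)^{\alpha}M_u(4r)^{1-\alpha}.\] Then $C(k,r,\alpha)\ge c\,e^{d\alpha kr}$, where $c>0$ and $d>0$ are absolute constants (independent of $k$, $r$, $\alpha$).
   Context: $\Delta$ is the Euclidean Laplacian on $\mathbb{R}^2$. *)

From Stdlib Require Import Reals.
From Coquelicot Require Import Coquelicot.
Open Scope R_scope.

Definition dx (u : R -> R -> R) : R -> R -> R :=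
  fun x y => Derive (fun t => u t y) x.
Definition dy (u : R -> R -> R) : R -> R -> R :=
  fun x y => Derive (fun t => u x t) y.

Definition cont2 (f : R -> R -> R) : Prop :=
  forall p : R * R, continuous (fun q : R * R => f (fst q) (snd q)) p.

Definition has_partials (f : R -> R -> R) : Prop :=
  (forall x y, ex_derive (fun t => f t y) x) /\
  (forall x y, ex_derive (fun t => f x t) y).

Definition C2 (u : R -> R -> R) : Prop :=
  cont2 u /\ has_partials u /\ cont2 (dx u) /\ cont2 (dy u) /\
  has_partials (dx u) /\ has_partials (dy u) /\
  cont2 (dx (dx u)) /\ cont2 (dy (dx u)) /\
  cont2 (dx (dy u)) /\ cont2 (dy (dy u)).

Definition laplacian (u : R -> R -> R) : R -> R -> R :=
  fun x y => dx (dx u) x y + dy (dy u) x y.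

Definition helmholtz_sol (k : R) (u : R -> R -> R) : Prop :=
  C2 u /\ forall x y, laplacian u x y + k ^ 2 * u x y = 0.

(* M_u(r) = max_{|x| <= r} |u(x)|, with |.| the Euclidean norm
   (the sup of a continuous function on a compact disk, i.e. the max). *)
Definition Mu (u : R -> R -> R) (r : R) : R :=
  real (Lub_Rbar (fun z => exists x y, x ^ 2 + y ^ 2 <= r ^ 2 /\ z = Rabs (u x y))).

(* a^b for a >= 0 and b > 0, with the convention 0^b = 0. *)
Definition rpow (a b : R) : R :=
  if Rle_dec a 0 then 0 else Rpower a b.

From Stdlib Require Import Reals.
From Coquelicot Require Import Coquelicot.
From Stdlib Require Import Lra Lia Psatz ZArith FunctionalExtensionality.
Open Scope R_scope.

(* A single solution does the job: one peaked at the point [p = (2 r, 0)].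
   Superposing the plane waves [cos (k w . (x - p))] over [N ~ 40 k r] equally
   spaced unit directions [w = (cos t, sin t)], with weights [cosh (3 k r sin t)],
   gives a solution whose modulus is everywhere at most its value at [p], and that
   value is at least [exp (3 k r) / (2 N)]; hence [M(4r) <= M(2r)].  On the disk of
   radius [r] the solution is the real part of an average of
   [exp (A w) exp (B / w)] over the [N]-th roots of unity [w].  Truncating both
   exponentials at order [N], the average keeps only the diagonal of the Cauchy
   product, [\sum_p (A B)^p / (p!)^2 <= exp (2 sqrt |A B|) <= exp (29/10 k r)],
   and the truncation error contributes at most [2].  So [M(2r) / M(r) >= exp (k r / 20) / 4800],
   and the three-ball inequality forces [C >= (exp (k r / 20) / 4800)^alpha]. *)

(** * Finite sums *)

Fixpoint rsum (f : nat -> R) (n : nat) : R :=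
  match n with O => 0 | S n => rsum f n + f n end.

Lemma rsum_ext f g n : (forall i, (i < n)%nat -> f i = g i) -> rsum f n = rsum g n.
Proof. induction n; simpl; intros; auto. rewrite IHn, H; auto. Qed.

Lemma rsum_plus f g n : rsum (fun i => f i + g i) n = rsum f n + rsum g n.
Proof. induction n; simpl; [lra|]. rewrite IHn; lra. Qed.

Lemma rsum_minus f g n : rsum (fun i => f i - g i) n = rsum f n - rsum g n.
Proof. induction n; simpl; [lra|]. rewrite IHn; lra. Qed.

Lemma rsum_scal c f n : rsum (fun i => c * f i) n = c * rsum f n.
Proof. induction n; simpl; [lra|]. rewrite IHn; lra. Qed.

Lemma rsum_const c n : rsum (fun _ => c) n = INR n * c.
Proof. induction n; simpl rsum; [simpl; lra|]. rewrite IHn, S_INR; lra. Qed.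

Lemma rsum_le f g n : (forall i, (i < n)%nat -> f i <= g i) -> rsum f n <= rsum g n.
Proof. induction n; simpl; intros; [lra|]. apply Rplus_le_compat; auto. Qed.

Lemma Rabs_rsum_le f n : Rabs (rsum f n) <= rsum (fun i => Rabs (f i)) n.
Proof.
  induction n; simpl; [rewrite Rabs_R0; lra|].
  eapply Rle_trans; [apply Rabs_triang | lra].
Qed.

Lemma rsum_nonneg f n : (forall i, (i < n)%nat -> 0 <= f i) -> 0 <= rsum f n.
Proof. intros H. rewrite <- (Rmult_0_r (INR n)), <- rsum_const. now apply rsum_le. Qed.

Lemma le_rsum_term f n j :
  (forall i, (i < n)%nat -> 0 <= f i) -> (j < n)%nat -> f j <= rsum f n.
Proof.
  induction n; simpl; intros Hf Hj; [lia|].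
  destruct (Nat.eq_dec j n) as [->|Hjn].
  - assert (0 <= rsum f n) by (apply rsum_nonneg; auto). lra.
  - assert (f j <= rsum f n) by (apply IHn; auto; lia).
    assert (0 <= f n) by auto. lra.
Qed.

Lemma rsum_sqr_le f n :
  (forall i, 0 <= f i) -> rsum (fun i => f i * f i) n <= rsum f n * rsum f n.
Proof.
  intros H. induction n; simpl; [lra|].
  assert (0 <= rsum f n) by (apply rsum_nonneg; auto). specialize (H n). nra.
Qed.

Lemma rsum_S_sum_f_R0 f n : rsum f (S n) = sum_f_R0 f n.
Proof. induction n; [simpl; ring|]. cbn [rsum] in *. rewrite IHn. simpl. ring. Qed.

(** * Superpositions of plane waves *)

Definition plane_waves (n : nat) (c a b d : nat -> R) (x y : R) : R :=
  rsum (fun j => c j * cos (a j * x + b j * y + d j)) n.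

Lemma is_derive_plane_waves_x n c a b d x y :
  is_derive (fun t => plane_waves n c a b d t y) x
    (plane_waves n (fun j => c j * a j) a b (fun j => d j + PI / 2) x y).
Proof.
  induction n; unfold plane_waves; simpl; [apply (is_derive_const 0)|].
  apply (is_derive_plus (fun t => plane_waves n c a b d t y)); [apply IHn|].
  replace (a n * x + b n * y + (d n + PI / 2)) with (a n * x + b n * y + d n + PI / 2) by ring.
  rewrite cos_plus, cos_PI2, sin_PI2.
  auto_derive; auto. ring.
Qed.

Lemma is_derive_plane_waves_y n c a b d x y :
  is_derive (fun t => plane_waves n c a b d x t) y
    (plane_waves n (fun j => c j * b j) a b (fun j => d j + PI / 2) x y).
Proof.
  induction n; unfold plane_waves; simpl; [apply (is_derive_const 0)|].
  apply (is_derive_plus (fun t => plane_waves n c a b d x t)); [apply IHn|].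
  replace (a n * x + b n * y + (d n + PI / 2)) with (a n * x + b n * y + d n + PI / 2) by ring.
  rewrite cos_plus, cos_PI2, sin_PI2.
  auto_derive; auto. ring.
Qed.

Lemma dx_plane_waves n c a b d :
  dx (plane_waves n c a b d) = plane_waves n (fun j => c j * a j) a b (fun j => d j + PI / 2).
Proof.
  do 2 (apply functional_extensionality; intro).
  apply is_derive_unique, is_derive_plane_waves_x.
Qed.

Lemma dy_plane_waves n c a b d :
  dy (plane_waves n c a b d) = plane_waves n (fun j => c j * b j) a b (fun j => d j + PI / 2).
Proof.
  do 2 (apply functional_extensionality; intro).
  apply is_derive_unique, is_derive_plane_waves_y.
Qed.

Lemma cont2_plane_waves n c a b d : cont2 (plane_waves n c a b d).
Proof.
  intros p. induction n; unfold plane_waves; simpl; [apply continuous_const|].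
  apply (continuous_plus (fun q : R * R => plane_waves n c a b d (fst q) (snd q))); [apply IHn|].
  apply (continuous_mult (fun _ => c n)); [apply continuous_const|].
  apply continuous_comp with (g := cos); [|apply continuous_cos].
  apply (continuous_plus (fun q : R * R => a n * fst q + b n * snd q));
    [|apply continuous_const].
  apply (continuous_plus (fun q : R * R => a n * fst q)).
  - apply (continuous_mult (fun _ => a n)); [apply continuous_const|].
    destruct p; apply continuous_fst.
  - apply (continuous_mult (fun _ => b n)); [apply continuous_const|].
    destruct p; apply continuous_snd.
Qed.

Lemma has_partials_plane_waves n c a b d : has_partials (plane_waves n c a b d).
Proof.
  split; intros x y; eexists.
  - apply is_derive_plane_waves_x.
  - apply is_derive_plane_waves_y.
Qed.

Lemma C2_plane_waves n c a b d : C2 (plane_waves n c a b d).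
Proof.
  unfold C2. repeat (rewrite dx_plane_waves || rewrite dy_plane_waves).
  repeat split; (apply cont2_plane_waves || apply has_partials_plane_waves).
Qed.

Lemma plane_waves_helmholtz k n c a b d :
  (forall j, (j < n)%nat -> a j ^ 2 + b j ^ 2 = k ^ 2) ->
  helmholtz_sol k (plane_waves n c a b d).
Proof.
  intros Hab. split; [apply C2_plane_waves|]. intros x y.
  unfold laplacian. rewrite !dx_plane_waves, !dy_plane_waves. unfold plane_waves.
  rewrite <- rsum_plus, <- rsum_scal, <- rsum_plus.
  rewrite <- (Rmult_0_r (INR n)), <- rsum_const.
  apply rsum_ext; intros j Hj.
  replace (a j * x + b j * y + (d j + PI / 2 + PI / 2))
    with (a j * x + b j * y + d j + PI) by field.
  rewrite neg_cos, <- (Hab j Hj). ring.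
Qed.

(** * The maximum function [Mu] *)

Lemma is_lub_Mu u rho K :
  (forall x y, x ^ 2 + y ^ 2 <= rho ^ 2 -> Rabs (u x y) <= K) ->
  is_lub_Rbar (fun z => exists x y, x ^ 2 + y ^ 2 <= rho ^ 2 /\ z = Rabs (u x y)) (Mu u rho).
Proof.
  intros HK. unfold Mu.
  set (E := fun z => exists x y, x ^ 2 + y ^ 2 <= rho ^ 2 /\ z = Rabs (u x y)).
  destruct (Lub_Rbar_correct E) as [Hub Hlub].
  assert (Hle : Rbar_le (Lub_Rbar E) K).
  { apply Hlub. intros z (x & y & Hxy & ->). now apply HK. }
  assert (Hge : Rbar_le (Rabs (u 0 0)) (Lub_Rbar E)).
  { apply Hub. exists 0, 0. split; [nra | reflexivity]. }
  destruct (Lub_Rbar E) as [l| |]; simpl in *; try contradiction.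
  now split.
Qed.

Lemma Mu_le u rho K :
  (forall x y, x ^ 2 + y ^ 2 <= rho ^ 2 -> Rabs (u x y) <= K) -> Mu u rho <= K.
Proof.
  intros HK. apply (proj2 (is_lub_Mu u rho K HK) K).
  intros z (x & y & Hxy & ->). now apply HK.
Qed.

Lemma le_Mu u rho K x y :
  (forall x y, x ^ 2 + y ^ 2 <= rho ^ 2 -> Rabs (u x y) <= K) ->
  x ^ 2 + y ^ 2 <= rho ^ 2 -> Rabs (u x y) <= Mu u rho.
Proof.
  intros HK Hxy. apply (proj1 (is_lub_Mu u rho K HK)). now exists x, y.
Qed.

(** * The complex exponential and its Taylor remainder *)

Lemma exp_le_compat a b : a <= b -> exp a <= exp b.
Proof. intros [H| ->]; [left; now apply exp_increasing | lra]. Qed.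

Lemma le_of_derive_nonneg (f df : R -> R) (a b : R) :
  a <= b -> (forall t, is_derive f t (df t)) -> (forall t, a <= t <= b -> 0 <= df t) ->
  f a <= f b.
Proof.
  intros Hab Hd Hpos.
  destruct (MVT_gen f a b df) as (c & Hc & Heq).
  - intros; apply Hd.
  - intros x _. apply continuity_pt_filterlim, (ex_derive_continuous f).
    eexists; apply Hd.
  - rewrite Rmin_left, Rmax_right in Hc by lra.
    assert (0 <= df c) by (apply Hpos; lra). nra.
Qed.

(* Comparing [H s] with the projection of [(g1, g2)(t)] on the direction of
   [(g1, g2)(s)] reduces this to the scalar case. *)
Lemma norm_le_of_derive_le (g1 g2 d1 d2 H h : R -> R) (s : R) : 0 <= s ->
  g1 0 = 0 -> g2 0 = 0 -> H 0 = 0 ->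
  (forall t, is_derive g1 t (d1 t)) -> (forall t, is_derive g2 t (d2 t)) ->
  (forall t, is_derive H t (h t)) ->
  (forall t, 0 <= t <= s -> sqrt (d1 t ^ 2 + d2 t ^ 2) <= h t) ->
  sqrt (g1 s ^ 2 + g2 s ^ 2) <= H s.
Proof.
  intros Hs G1 G2 H0 D1 D2 DH Hb.
  set (m := sqrt (g1 s ^ 2 + g2 s ^ 2)).
  assert (Hm0 : 0 <= m) by apply sqrt_pos.
  assert (Hmm : m * m = g1 s ^ 2 + g2 s ^ 2) by (apply sqrt_sqrt; nra).
  assert (Hproj : m * H 0 - (g1 s * g1 0 + g2 s * g2 0)
                  <= m * H s - (g1 s * g1 s + g2 s * g2 s)).
  { apply (le_of_derive_nonneg (fun t => m * H t - (g1 s * g1 t + g2 s * g2 t))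
             (fun t => m * h t - (g1 s * d1 t + g2 s * d2 t)) 0 s Hs).
    - intros t. apply @is_derive_minus; [apply @is_derive_scal, DH|].
      apply @is_derive_plus; apply @is_derive_scal; auto.
    - intros t Ht. assert (Cs := sqrt_cauchy (g1 s) (g2 s) (d1 t) (d2 t)).
      unfold Rsqr in Cs.
      replace (g1 s * g1 s + g2 s * g2 s) with (g1 s ^ 2 + g2 s ^ 2) in Cs by ring.
      replace (d1 t * d1 t + d2 t * d2 t) with (d1 t ^ 2 + d2 t ^ 2) in Cs by ring.
      fold m in Cs. assert (Hb' := Hb t Ht). nra. }
  rewrite G1, G2, H0 in Hproj.
  assert (HH : H 0 <= H s).
  { apply (le_of_derive_nonneg H h 0 s Hs DH).
    intros t Ht. eapply Rle_trans; [apply sqrt_pos | now apply Hb]. }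
  destruct Hm0 as [Hm0|Z]; [|rewrite <- Z; lra].
  apply Rmult_le_reg_l with m; nra.
Qed.

Definition inv_fact (n : nat) : R := / INR (Factorial.fact n).

Lemma inv_fact_pos n : 0 < inv_fact n.
Proof. apply Rinv_0_lt_compat, lt_0_INR, Factorial.lt_O_fact. Qed.

Lemma inv_fact_S n : inv_fact (S n) = inv_fact n / INR (S n).
Proof.
  unfold inv_fact. change (Factorial.fact (S n)) with (S n * Factorial.fact n)%nat.
  rewrite mult_INR. field.
  split; apply not_0_INR; [apply Factorial.fact_neq_0 | lia].
Qed.

Lemma rsum_pow_inv_fact_le_exp x N : 0 <= x -> rsum (fun n => x ^ n * inv_fact n) N <= exp x.
Proof.
  intros Hx. destruct N; [simpl; left; apply exp_pos|].
  rewrite rsum_S_sum_f_R0. eapply Rle_trans; [|apply (exp_ge_taylor x N Hx)].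
  right. apply sum_eq. intros; reflexivity.
Qed.

Lemma is_derive_rsum_pow_inv_fact (c : nat -> R) N s :
  is_derive (fun t => rsum (fun n => t ^ n * inv_fact n * c n) (S N)) s
    (rsum (fun n => s ^ n * inv_fact n * c (S n)) N).
Proof.
  induction N as [|N IH]; [simpl; auto_derive; auto; ring|].
  apply (is_derive_plus (fun t => rsum (fun n => t ^ n * inv_fact n * c n) (S N))); [exact IH|].
  rewrite inv_fact_S.
  assert (INR (S N) <> 0) by (apply not_0_INR; lia).
  auto_derive; auto.
  change (match N with 0%nat => 1 | S _ => INR N + 1 end) with (INR (S N)).
  field; auto.
Qed.

Lemma rsum_pow_inv_fact_0 (c : nat -> R) N : rsum (fun n => 0 ^ n * inv_fact n * c n) (S N) = c O.
Proof.
  induction N as [|N IH]; [simpl; unfold inv_fact; simpl; field|].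
  cbn [rsum] in *. rewrite IH, pow_i by lia. ring.
Qed.

Definition cexp (z : C) : C := (exp (fst z) * cos (snd z), exp (fst z) * sin (snd z)).

Lemma Cmod_cexp z : Cmod (cexp z) = exp (fst z).
Proof.
  unfold Cmod, cexp; cbn [fst snd].
  replace ((exp (fst z) * cos (snd z)) ^ 2 + (exp (fst z) * sin (snd z)) ^ 2)
    with (exp (fst z) ^ 2 * (sin (snd z) ^ 2 + cos (snd z) ^ 2)) by ring.
  rewrite <- !Rsqr_pow2, sin2_cos2, Rmult_1_r. apply sqrt_Rsqr. left; apply exp_pos.
Qed.

Lemma Cmod_cexp_le z : Cmod (cexp z) <= exp (Cmod z).
Proof.
  rewrite Cmod_cexp. apply exp_le_compat.
  eapply Rle_trans; [apply Rle_abs | apply re_le_Cmod].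
Qed.

Lemma cexp_add z w : cexp (z + w)%C = (cexp z * cexp w)%C.
Proof.
  destruct z as [a b], w as [c d]. unfold cexp, Cplus, Cmult; simpl.
  rewrite exp_plus, cos_plus, sin_plus. f_equal; ring.
Qed.

Fixpoint csum (f : nat -> C) (n : nat) : C :=
  match n with O => RtoC 0 | S n => (csum f n + f n)%C end.

Lemma fst_csum f n : fst (csum f n) = rsum (fun i => fst (f i)) n.
Proof. induction n; simpl; auto. now rewrite IHn. Qed.

Lemma snd_csum f n : snd (csum f n) = rsum (fun i => snd (f i)) n.
Proof. induction n; simpl; auto. now rewrite IHn. Qed.

Lemma Cmod_csum_le f n : Cmod (csum f n) <= rsum (fun i => Cmod (f i)) n.
Proof.
  induction n; simpl; [rewrite Cmod_0; lra|].
  eapply Rle_trans; [apply Cmod_triangle | lra].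
Qed.

Definition exp_taylor (N : nat) (z : C) : C := csum (fun n => (inv_fact n * z ^ n)%C) N.

Lemma Cmod_exp_taylor_le z N : Cmod (exp_taylor N z) <= exp (Cmod z).
Proof.
  eapply Rle_trans; [apply Cmod_csum_le|].
  eapply Rle_trans; [|apply (rsum_pow_inv_fact_le_exp (Cmod z) N (Cmod_ge_0 z))].
  right. apply rsum_ext; intros.
  rewrite Cmod_mult, Cmod_R, Cmod_pow, Rabs_pos_eq by (left; apply inv_fact_pos). ring.
Qed.

Section TaylorRemainder.
Variable z : C.
Let a := fst z.
Let b := snd z.
Let m := Cmod z.

(* Real and imaginary parts of [cexp (s z) - exp_taylor N (s z)], and a majorant. *)
Let rem_re N s :=
  exp (s * a) * cos (s * b) - rsum (fun n => s ^ n * inv_fact n * fst (z ^ n)%C) N.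
Let rem_im N s :=
  exp (s * a) * sin (s * b) - rsum (fun n => s ^ n * inv_fact n * snd (z ^ n)%C) N.
Let rem_bound N s := (s * m) ^ N * inv_fact N * exp (s * m).

Lemma is_derive_rem_re N s : is_derive (rem_re (S N)) s (a * rem_re N s - b * rem_im N s).
Proof.
  unfold rem_re, rem_im.
  replace (a * (exp (s * a) * cos (s * b) - rsum (fun n => s ^ n * inv_fact n * fst (z ^ n)%C) N) -
           b * (exp (s * a) * sin (s * b) - rsum (fun n => s ^ n * inv_fact n * snd (z ^ n)%C) N))
    with ((a * exp (s * a) * cos (s * b) - b * exp (s * a) * sin (s * b)) -
          rsum (fun n => s ^ n * inv_fact n * fst (z ^ S n)%C) N).
  2:{ assert (Hs : rsum (fun n => s ^ n * inv_fact n * fst (z ^ S n)%C) N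
           = a * rsum (fun n => s ^ n * inv_fact n * fst (z ^ n)%C) N
             - b * rsum (fun n => s ^ n * inv_fact n * snd (z ^ n)%C) N).
      { rewrite <- !rsum_scal, <- rsum_minus.
        apply rsum_ext; intros; simpl; unfold a, b; ring. }
      rewrite Hs; ring. }
  apply (is_derive_minus (fun s => exp (s * a) * cos (s * b))).
  - auto_derive; auto; ring.
  - apply (is_derive_rsum_pow_inv_fact (fun n => fst (z ^ n)%C)).
Qed.

Lemma is_derive_rem_im N s : is_derive (rem_im (S N)) s (a * rem_im N s + b * rem_re N s).
Proof.
  unfold rem_re, rem_im.
  replace (a * (exp (s * a) * sin (s * b) - rsum (fun n => s ^ n * inv_fact n * snd (z ^ n)%C) N) +
           b * (exp (s * a) * cos (s * b) - rsum (fun n => s ^ n * inv_fact n * fst (z ^ n)%C) N))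
    with ((a * exp (s * a) * sin (s * b) + b * exp (s * a) * cos (s * b)) -
          rsum (fun n => s ^ n * inv_fact n * snd (z ^ S n)%C) N).
  2:{ assert (Hs : rsum (fun n => s ^ n * inv_fact n * snd (z ^ S n)%C) N
           = a * rsum (fun n => s ^ n * inv_fact n * snd (z ^ n)%C) N
             + b * rsum (fun n => s ^ n * inv_fact n * fst (z ^ n)%C) N).
      { rewrite <- !rsum_scal, <- rsum_plus.
        apply rsum_ext; intros; simpl; unfold a, b; ring. }
      rewrite Hs; ring. }
  apply (is_derive_minus (fun s => exp (s * a) * sin (s * b))).
  - auto_derive; auto; ring.
  - apply (is_derive_rsum_pow_inv_fact (fun n => snd (z ^ n)%C)).
Qed.

Lemma is_derive_rem_bound N s :
  is_derive (rem_bound (S N)) s (m * rem_bound N s + m * rem_bound (S N) s).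
Proof.
  unfold rem_bound. rewrite inv_fact_S.
  assert (INR (S N) <> 0) by (apply not_0_INR; lia).
  auto_derive; auto.
  change (match N with 0%nat => 1 | S _ => INR N + 1 end) with (INR (S N)).
  simpl pow. field; auto.
Qed.

Lemma rem_norm_le N s : 0 <= s -> sqrt (rem_re N s ^ 2 + rem_im N s ^ 2) <= rem_bound N s.
Proof.
  assert (Hm : 0 <= m) by apply Cmod_ge_0.
  revert s. induction N as [|N IH]; intros s Hs.
  - unfold rem_re, rem_im, rem_bound; simpl rsum.
    rewrite !Rminus_0_r, pow_O.
    replace (inv_fact 0) with 1 by (unfold inv_fact; simpl; field).
    assert (E : sqrt ((exp (s * a) * cos (s * b)) ^ 2 + (exp (s * a) * sin (s * b)) ^ 2)
                = Cmod (cexp (s * a, s * b))) by reflexivity.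
    rewrite E, Cmod_cexp, !Rmult_1_l. simpl fst.
    apply exp_le_compat, Rmult_le_compat_l; auto.
    eapply Rle_trans; [apply Rle_abs | apply re_le_Cmod].
  - apply (norm_le_of_derive_le _ _ (fun t => a * rem_re N t - b * rem_im N t)
             (fun t => a * rem_im N t + b * rem_re N t) _
             (fun t => m * rem_bound N t + m * rem_bound (S N) t)); auto.
    + unfold rem_re. rewrite rsum_pow_inv_fact_0, !Rmult_0_l, exp_0, cos_0. simpl; ring.
    + unfold rem_im. rewrite rsum_pow_inv_fact_0, !Rmult_0_l, exp_0, sin_0. simpl; ring.
    + unfold rem_bound. rewrite Rmult_0_l, pow_i by lia. ring.
    + apply is_derive_rem_re.
    + apply is_derive_rem_im.
    + apply is_derive_rem_bound.
    + intros t Ht.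
      assert (E : sqrt ((a * rem_re N t - b * rem_im N t) ^ 2
                        + (a * rem_im N t + b * rem_re N t) ^ 2)
                  = m * sqrt (rem_re N t ^ 2 + rem_im N t ^ 2))
        by exact (Cmod_mult z (rem_re N t, rem_im N t)).
      rewrite E.
      assert (0 <= m * rem_bound (S N) t).
      { unfold rem_bound. apply Rmult_le_pos; auto.
        apply Rmult_le_pos; [apply Rmult_le_pos|left; apply exp_pos].
        - apply pow_le. apply Rmult_le_pos; lra.
        - left; apply inv_fact_pos. }
      assert (m * sqrt (rem_re N t ^ 2 + rem_im N t ^ 2) <= m * rem_bound N t)
        by (apply Rmult_le_compat_l; auto; apply IH; lra).
      lra.
Qed.

Lemma Cmod_cexp_sub_exp_taylor_le N :
  Cmod (cexp z - exp_taylor N z)%C <= Cmod z ^ N * inv_fact N * exp (Cmod z).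
Proof.
  assert (H := rem_norm_le N 1 ltac:(lra)). unfold rem_bound in H.
  rewrite !Rmult_1_l in H. eapply Rle_trans; [|apply H]. right.
  unfold Cmod. f_equal.
  unfold rem_re, rem_im, exp_taylor, Cminus, Cplus, Copp, cexp; simpl.
  rewrite fst_csum, snd_csum, !Rmult_1_l.
  rewrite (rsum_ext (fun i => fst _) (fun n => 1 ^ n * inv_fact n * fst (z ^ n)%C))
    by (intros; simpl; rewrite pow1; ring).
  rewrite (rsum_ext (fun i => snd _) (fun n => 1 ^ n * inv_fact n * snd (z ^ n)%C))
    by (intros; simpl; rewrite pow1; ring).
  unfold a, b; ring.
Qed.

End TaylorRemainder.

(** * Averages over roots of unity *)

Lemma csum_ext f g n : (forall i, (i < n)%nat -> f i = g i) -> csum f n = csum g n.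
Proof. induction n; simpl; intros; auto. rewrite IHn, H; auto. Qed.

Lemma csum_plus f g n : csum (fun i => f i + g i)%C n = (csum f n + csum g n)%C.
Proof. induction n; simpl; [apply injective_projections; simpl; ring|]. rewrite IHn; ring. Qed.

Lemma csum_scal c f n : csum (fun i => c * f i)%C n = (c * csum f n)%C.
Proof. induction n; simpl; [apply injective_projections; simpl; ring|]. rewrite IHn; ring. Qed.

Lemma csum_zero n : csum (fun _ => RtoC 0) n = RtoC 0.
Proof. induction n; simpl; auto. rewrite IHn. apply injective_projections; simpl; ring. Qed.

Lemma csum_const (c : R) n : csum (fun _ => RtoC c) n = RtoC (INR n * c).
Proof.
  induction n; simpl csum; [apply injective_projections; simpl; ring|].
  rewrite IHn, S_INR. apply injective_projections; simpl; ring.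
Qed.

Lemma csum_mult f g n m :
  (csum f n * csum g m)%C = csum (fun p => csum (fun q => f p * g q)%C m) n.
Proof.
  induction n; simpl.
  - apply injective_projections; simpl; ring.
  - rewrite <- IHn, csum_scal. ring.
Qed.

Lemma csum_swap (f : nat -> nat -> C) n m :
  csum (fun i => csum (fun j => f i j) m) n = csum (fun j => csum (fun i => f i j) n) m.
Proof.
  induction n; simpl; [now rewrite csum_zero|].
  now rewrite IHn, <- csum_plus.
Qed.

Lemma csum_delta (f : nat -> C) p n : (p < n)%nat ->
  csum (fun q => if Nat.eqb q p then f q else RtoC 0) n = f p.
Proof.
  induction n; intros Hp; [lia|]. simpl. destruct (Nat.eq_dec p n) as [->|Hpn].
  - rewrite Nat.eqb_refl, (csum_ext _ (fun _ => RtoC 0)), csum_zero.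
    + apply injective_projections; simpl; ring.
    + intros i Hi. destruct (Nat.eqb_spec i n); [lia | auto].
  - rewrite IHn by lia. destruct (Nat.eqb_spec n p); [lia|].
    apply injective_projections; simpl; ring.
Qed.

Lemma csum_geometric (w : C) n : ((w - 1) * csum (fun j => w ^ j) n)%C = (w ^ n - 1)%C.
Proof.
  induction n; simpl csum.
  - apply injective_projections; simpl; ring.
  - rewrite Cmult_plus_distr_l, IHn. simpl. ring.
Qed.

Definition cis (t : R) : C := (cos t, sin t).

Lemma cis_add a b : cis (a + b) = (cis a * cis b)%C.
Proof. unfold cis, Cmult; simpl. rewrite cos_plus, sin_plus. f_equal; ring. Qed.

Lemma cis_pow t n : (cis t ^ n)%C = cis (INR n * t).
Proof.
  induction n; simpl Cpow.
  - unfold cis. now rewrite Rmult_0_l, cos_0, sin_0.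
  - rewrite IHn, <- cis_add, S_INR. f_equal; ring.
Qed.

Lemma cis_add_2PI_mult x (j : nat) : cis (x + 2 * INR j * PI) = cis x.
Proof. unfold cis. now rewrite cos_period, sin_period. Qed.

Lemma Cmod_cis t : Cmod (cis t) = 1.
Proof.
  unfold Cmod, cis; cbn [fst snd].
  rewrite <- !Rsqr_pow2, Rplus_comm, sin2_cos2. apply sqrt_1.
Qed.

Lemma cis_neq_1 t : 0 < t < 2 * PI -> cis t <> 1%C.
Proof.
  intros Ht E. unfold cis in E. injection E as Ec Es.
  destruct (sin_eq_O_2PI_0 t) as [|[->|]]; try lra.
  rewrite cos_PI in Ec. lra.
Qed.

Definition root_angle (N j : nat) : R := 2 * PI * INR j / INR N.

Lemma sum_cis_root_angles (N p q : nat) : (p < N)%nat -> (q < N)%nat ->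
  csum (fun j => cis ((INR p - INR q) * root_angle N j)) N
  = if Nat.eqb p q then RtoC (INR N) else RtoC 0.
Proof.
  intros Hp Hq. assert (HN : 0 < INR N) by (apply lt_0_INR; lia).
  assert (Hpi := PI_RGT_0).
  assert (Hroot : forall d, (0 < d < N)%nat ->
            csum (fun j => cis (INR d * root_angle N j)) N = RtoC 0).
  { intros d Hd. set (w := cis (2 * PI * INR d / INR N)).
    assert (Hw : w <> 1%C).
    { apply cis_neq_1. assert (0 < INR d) by (apply lt_0_INR; lia).
      assert (INR d < INR N) by (apply lt_INR; lia).
      split; [apply Rdiv_lt_0_compat; nra|].
      apply Rmult_lt_reg_r with (INR N); auto. field_simplify; nra. }
    assert (HwN : (w ^ N)%C = 1%C).
    { unfold w. rewrite cis_pow.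
      replace (INR N * (2 * PI * INR d / INR N)) with (0 + 2 * INR d * PI) by (field; lra).
      rewrite cis_add_2PI_mult. unfold cis. now rewrite cos_0, sin_0. }
    rewrite (csum_ext _ (fun j => w ^ j)%C).
    - assert (Hgeo : ((w - 1) * csum (fun j => w ^ j) N)%C = 0%C).
      { rewrite csum_geometric, HwN. apply injective_projections; simpl; ring. }
      assert (Hw1 : (w - 1)%C <> 0%C) by (intro E; apply Hw; rewrite <- (Cplus_0_l 1), <- E; ring).
      rewrite <- (Cmult_1_l (csum _ N)), <- (Cinv_l _ Hw1), <- Cmult_assoc, Hgeo.
      apply injective_projections; simpl; ring.
    - intros j _. unfold w, root_angle. rewrite cis_pow. f_equal. field. lra. }
  destruct (Nat.eqb_spec p q) as [<-|Hpq].
  - rewrite (csum_ext _ (fun _ => RtoC 1)), csum_const, Rmult_1_r; [reflexivity|].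
    intros. unfold cis. now rewrite Rminus_diag, Rmult_0_l, cos_0, sin_0.
  - destruct (Nat.lt_ge_cases q p).
    + rewrite <- (Hroot (p - q)%nat) by lia. apply csum_ext; intros.
      now rewrite minus_INR by lia.
    + rewrite <- (Hroot (N - (q - p))%nat) by lia. apply csum_ext; intros j _.
      rewrite <- (cis_add_2PI_mult _ j). unfold root_angle.
      rewrite !minus_INR by lia. f_equal. field. lra.
Qed.

(* Only the diagonal [p = q] survives averaging over the roots of unity. *)
Lemma sum_root_angles_exp_taylor_mult (A B : C) N : (0 < N)%nat ->
  csum (fun j => exp_taylor N (A * cis (root_angle N j))
                 * exp_taylor N (B * cis (- root_angle N j)))%C N
  = (INR N * csum (fun p => (inv_fact p * inv_fact p) * (A * B) ^ p)%C N)%C.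
Proof.
  intros HN.
  rewrite (csum_ext _ (fun j => csum (fun p => csum (fun q =>
             (inv_fact p * A ^ p) * (inv_fact q * B ^ q)
             * cis ((INR p - INR q) * root_angle N j))%C N) N)).
  2:{ intros j Hj. unfold exp_taylor. rewrite csum_mult.
      apply csum_ext; intros p Hp. apply csum_ext; intros q Hq.
      rewrite !Cpow_mult_l, !cis_pow.
      replace ((INR p - INR q) * root_angle N j)
        with (INR p * root_angle N j + INR q * - root_angle N j) by ring.
      rewrite cis_add. ring. }
  rewrite csum_swap, <- csum_scal. apply csum_ext; intros p Hp.
  rewrite csum_swap.
  rewrite (csum_ext _ (fun q => if Nat.eqb q p
             then ((inv_fact p * A ^ p) * (inv_fact q * B ^ q) * INR N)%C else RtoC 0)).
  - rewrite (csum_delta (fun q => (inv_fact p * A ^ p) * (inv_fact q * B ^ q) * INR N)%C) by auto.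
    rewrite Cpow_mult_l. ring.
  - intros q Hq. rewrite csum_scal, sum_cis_root_angles, Nat.eqb_sym by auto.
    destruct (Nat.eqb q p); [ring|]. apply injective_projections; simpl; ring.
Qed.

Lemma Cmod_sum_sqr_inv_fact_le (w : C) N :
  Cmod (csum (fun p => (inv_fact p * inv_fact p) * w ^ p)%C N) <= exp (2 * sqrt (Cmod w)).
Proof.
  set (c := sqrt (Cmod w)).
  assert (Hc0 : 0 <= c) by apply sqrt_pos.
  assert (Hcc : c * c = Cmod w) by (apply sqrt_sqrt, Cmod_ge_0).
  assert (Hterm : forall p, 0 <= c ^ p * inv_fact p).
  { intros p. apply Rmult_le_pos; [now apply pow_le | left; apply inv_fact_pos]. }
  eapply Rle_trans; [apply Cmod_csum_le|].
  apply Rle_trans with (rsum (fun p => (c ^ p * inv_fact p) * (c ^ p * inv_fact p)) N).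
  - right. apply rsum_ext; intros p _.
    assert (0 < inv_fact p) by apply inv_fact_pos.
    rewrite !Cmod_mult, !Cmod_R, Cmod_pow, <- Hcc, Rpow_mult_distr, !Rabs_pos_eq by lra. ring.
  - eapply Rle_trans; [apply (rsum_sqr_le (fun p => c ^ p * inv_fact p)); auto|].
    replace (2 * c) with (c + c) by ring. rewrite exp_plus.
    assert (H1 := rsum_pow_inv_fact_le_exp c N Hc0).
    assert (0 <= rsum (fun p => c ^ p * inv_fact p) N) by (apply rsum_nonneg; auto).
    apply Rmult_le_compat; auto.
Qed.

Lemma Cmod_cexp_sub_exp_taylor_le_bound z N M :
  Cmod z <= M -> Cmod (cexp z - exp_taylor N z)%C <= M ^ N * inv_fact N * exp M.
Proof.
  intros Hz. assert (0 <= Cmod z) by apply Cmod_ge_0.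
  assert (0 < inv_fact N) by apply inv_fact_pos.
  eapply Rle_trans; [apply Cmod_cexp_sub_exp_taylor_le|].
  apply Rmult_le_compat.
  - apply Rmult_le_pos; [now apply pow_le | lra].
  - left; apply exp_pos.
  - apply Rmult_le_compat_r; [lra|]. now apply pow_incr.
  - now apply exp_le_compat.
Qed.

Lemma Cmod_cexp_mult_sub_exp_taylor_le (a b : C) N M : Cmod a <= M -> Cmod b <= M ->
  Cmod (cexp a * cexp b - exp_taylor N a * exp_taylor N b)%C
  <= 2 * (M ^ N * inv_fact N) * exp (2 * M).
Proof.
  intros Ha Hb.
  replace (cexp a * cexp b - exp_taylor N a * exp_taylor N b)%C
    with ((cexp a - exp_taylor N a) * cexp b + exp_taylor N a * (cexp b - exp_taylor N b))%C
    by ring.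
  eapply Rle_trans; [apply Cmod_triangle|]. rewrite !Cmod_mult.
  assert (Ra := Cmod_cexp_sub_exp_taylor_le_bound a N M Ha).
  assert (Rb := Cmod_cexp_sub_exp_taylor_le_bound b N M Hb).
  assert (Eb : Cmod (cexp b) <= exp M)
    by (eapply Rle_trans; [apply Cmod_cexp_le | now apply exp_le_compat]).
  assert (Ta : Cmod (exp_taylor N a) <= exp M)
    by (eapply Rle_trans; [apply Cmod_exp_taylor_le | now apply exp_le_compat]).
  assert (0 <= Cmod (cexp a - exp_taylor N a)%C) by apply Cmod_ge_0.
  assert (0 <= Cmod (cexp b - exp_taylor N b)%C) by apply Cmod_ge_0.
  assert (0 <= Cmod (cexp b)) by apply Cmod_ge_0.
  assert (0 <= Cmod (exp_taylor N a)) by apply Cmod_ge_0.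
  replace (2 * M) with (M + M) by ring. rewrite exp_plus.
  assert (Cmod (cexp a - exp_taylor N a)%C * Cmod (cexp b)
          <= M ^ N * inv_fact N * exp M * exp M) by (apply Rmult_le_compat; auto).
  assert (Cmod (exp_taylor N a) * Cmod (cexp b - exp_taylor N b)%C
          <= exp M * (M ^ N * inv_fact N * exp M)) by (apply Rmult_le_compat; auto).
  lra.
Qed.

(* Truncating the exponentials at order [N] makes the average over the [N]-th
   roots of unity computable exactly; the truncation error is what remains. *)
Lemma Cmod_sum_root_angles_cexp_mult_le (A B : C) N M :
  (0 < N)%nat -> Cmod A <= M -> Cmod B <= M ->
  Cmod (csum (fun j => cexp (A * cis (root_angle N j)) * cexp (B * cis (- root_angle N j)))%C N)
  <= INR N * (exp (2 * sqrt (Cmod A * Cmod B)) + 2 * (M ^ N * inv_fact N) * exp (2 * M)).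
Proof.
  intros HN HA HB.
  set (E := fun j => (cexp (A * cis (root_angle N j)) * cexp (B * cis (- root_angle N j)))%C).
  set (F := fun j => (exp_taylor N (A * cis (root_angle N j))
                      * exp_taylor N (B * cis (- root_angle N j)))%C).
  replace (csum E N) with (csum F N + csum (fun j => E j - F j) N)%C.
  2:{ rewrite <- csum_plus. apply csum_ext; intros. ring. }
  eapply Rle_trans; [apply Cmod_triangle|]. rewrite Rmult_plus_distr_l.
  apply Rplus_le_compat.
  - unfold F. rewrite sum_root_angles_exp_taylor_mult by auto.
    rewrite Cmod_mult, Cmod_R, Rabs_pos_eq by apply pos_INR.
    apply Rmult_le_compat_l; [apply pos_INR|].
    rewrite <- Cmod_mult. apply Cmod_sum_sqr_inv_fact_le.
  - eapply Rle_trans; [apply Cmod_csum_le|]. rewrite <- rsum_const.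
    apply rsum_le; intros j _. unfold E, F.
    apply Cmod_cexp_mult_sub_exp_taylor_le; rewrite Cmod_mult, Cmod_cis; lra.
Qed.

Lemma pow_inv_fact_exp_le_1 M N : 0 <= M -> (0 < N)%nat -> 80 * M <= 7 * INR N ->
  M ^ N * inv_fact N * exp (2 * M) <= 1.
Proof.
  intros HM HN HMN. assert (HNp : 0 < INR N) by (apply lt_0_INR; lia).
  assert (Hfact : INR N ^ N * inv_fact N <= exp (INR N)).
  { eapply Rle_trans; [|apply (rsum_pow_inv_fact_le_exp (INR N) (S N)); lra].
    apply (le_rsum_term (fun n => INR N ^ n * inv_fact n) (S N) N); [|lia].
    intros; apply Rmult_le_pos; [apply pow_le; lra | left; apply inv_fact_pos]. }
  set (q := M / INR N).
  assert (Hq0 : 0 <= q) by (apply Rmult_le_pos; [lra | left; apply Rinv_0_lt_compat; lra]).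
  assert (Hq : q <= 7 / 80) by (apply Rmult_le_reg_r with (INR N); unfold q; field_simplify; lra).
  assert (HMq : M = INR N * q) by (unfold q; field; lra).
  assert (He := exp_le_3).
  assert (He2 : exp (2 * q) <= exp 1) by (apply exp_le_compat; lra).
  assert (exp_INR_mult : forall t, exp (INR N * t) = exp t ^ N).
  { intros t. clear -t. induction N; [simpl; now rewrite Rmult_0_l, exp_0|].
    rewrite S_INR, Rmult_plus_distr_r, Rmult_1_l, exp_plus, IHN. simpl; ring. }
  assert (Key : M ^ N * inv_fact N * exp (2 * M) <= (q * exp 1 * exp (2 * q)) ^ N).
  { rewrite !Rpow_mult_distr, <- !exp_INR_mult, Rmult_1_r, HMq, Rpow_mult_distr.
    replace (2 * (INR N * q)) with (INR N * (2 * q)) by ring.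
    assert (0 <= q ^ N) by (apply pow_le; lra).
    assert (0 < exp (INR N * (2 * q))) by apply exp_pos.
    replace (INR N ^ N * q ^ N * inv_fact N * exp (INR N * (2 * q)))
      with (q ^ N * exp (INR N * (2 * q)) * (INR N ^ N * inv_fact N)) by ring.
    replace (q ^ N * exp (INR N) * exp (INR N * (2 * q)))
      with (q ^ N * exp (INR N * (2 * q)) * exp (INR N)) by ring.
    apply Rmult_le_compat_l; [apply Rmult_le_pos|]; lra. }
  assert (Hb : q * exp 1 * exp (2 * q) <= 1).
  { assert (0 < exp 1) by apply exp_pos. assert (0 < exp (2 * q)) by apply exp_pos.
    assert (q * exp 1 <= 7 / 80 * 3) by (apply Rmult_le_compat; lra).
    assert (q * exp 1 * exp (2 * q) <= 7 / 80 * 3 * 3)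
      by (apply Rmult_le_compat; try lra; apply Rmult_le_pos; lra).
    lra. }
  rewrite <- (pow1 N). eapply Rle_trans; [apply Key|].
  apply pow_incr. split; [|exact Hb].
  apply Rmult_le_pos; [apply Rmult_le_pos|]; try lra; left; apply exp_pos.
Qed.

(** * A solution peaked at distance [2 r] *)

Lemma shifted_dist_product_le x y r b : 0 < r -> x ^ 2 + y ^ 2 <= r ^ 2 -> b ^ 2 = 9 * r ^ 2 ->
  (y ^ 2 + (x - 2 * r - b) ^ 2) * (y ^ 2 + (x - 2 * r + b) ^ 2) <= 70 * r ^ 4.
Proof.
  intros Hr Hd Hb.
  replace ((y ^ 2 + (x - 2 * r - b) ^ 2) * (y ^ 2 + (x - 2 * r + b) ^ 2))
    with (((x - 2 * r) ^ 2 + y ^ 2 + b ^ 2) ^ 2 - 4 * (x - 2 * r) ^ 2 * b ^ 2) by ring.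
  rewrite Hb.
  assert (Hx : x <= r) by nra.
  set (s := x ^ 2 + y ^ 2).
  replace (y ^ 2) with (s - x ^ 2) by (unfold s; ring).
  assert (Hs0 : 0 <= s) by (unfold s; apply Rplus_le_le_0_compat; apply pow2_ge_0).
  assert (Hsr : s <= r ^ 2) by (unfold s; lra).
  assert (Hrx : r * x <= r * r) by (apply Rmult_le_compat_l; lra).
  assert (0 <= (r ^ 2 - s) * (27 * r ^ 2 + s - 8 * r * x)) by (apply Rmult_le_pos; nra).
  assert (0 <= r ^ 2 * (x - 4 / 5 * r) ^ 2) by (apply Rmult_le_pos; apply pow2_ge_0).
  assert (0 <= r ^ 4) by (apply pow_le; lra).
  replace (((x - 2 * r) ^ 2 + (s - x ^ 2) + 9 * r ^ 2) ^ 2 - 4 * (x - 2 * r) ^ 2 * (9 * r ^ 2))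
    with (81 * r ^ 4 - (r ^ 2 - s) * (27 * r ^ 2 + s - 8 * r * x)
          - 20 * (r ^ 2 * (x - 4 / 5 * r) ^ 2) - 81 / 5 * r ^ 4) by field.
  lra.
Qed.

Lemma sqrt_le_of_le_sqr u v : 0 <= v -> u <= v ^ 2 -> sqrt u <= v.
Proof.
  intros Hv Hu. destruct (Rle_or_lt 0 u).
  - rewrite <- (sqrt_pow2 v Hv). now apply sqrt_le_1_alt.
  - rewrite sqrt_neg_0 by lra. auto.
Qed.

Lemma fst_cexp_mult_cis (k beta X y t : R) :
  fst (Cmult (cexp (Cmult (k / 2 * y, k / 2 * (X - beta)) (cis t)))
             (cexp (Cmult (- (k / 2) * y, k / 2 * (X + beta)) (cis (- t)))))
  = exp (k * beta * sin t) * cos (k * (X * cos t + y * sin t)).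
Proof.
  rewrite <- cexp_add. unfold cexp, Cplus, Cmult, cis. cbn [fst snd].
  rewrite cos_neg, sin_neg. f_equal; f_equal; field.
Qed.

(* The sum is the real part of [\sum_j cexp (A w_j) cexp (B / w_j)] over the
   [N]-th roots of unity [w_j]; since [|A| |B| <= sqrt 70 (k r)^2 / 4], the main
   term [exp (2 sqrt (|A| |B|))] is at most [exp (29/10 k r)]. *)
Lemma rsum_root_angles_small_on_disk k r N x y beta :
  0 < k -> 0 < r -> x ^ 2 + y ^ 2 <= r ^ 2 -> beta ^ 2 = 9 * r ^ 2 ->
  40 * k * r <= INR N ->
  Rabs (rsum (fun j => exp (k * beta * sin (root_angle N j))
                       * cos (k * ((x - 2 * r) * cos (root_angle N j)
                                   + y * sin (root_angle N j)))) N)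
  <= INR N * (exp (29 / 10 * k * r) + 2).
Proof.
  intros Hk Hr Hd Hb HNk.
  assert (HN : (0 < N)%nat) by (apply INR_lt; simpl; nra).
  set (X := x - 2 * r).
  set (A := (k / 2 * y, k / 2 * (X - beta))). set (B := (- (k / 2) * y, k / 2 * (X + beta))).
  rewrite (rsum_ext _ (fun j => fst (cexp (A * cis (root_angle N j))
                                     * cexp (B * cis (- root_angle N j)))%C))
    by (intros; unfold A, B; now rewrite fst_cexp_mult_cis).
  rewrite <- fst_csum. eapply Rle_trans; [apply re_le_Cmod|].
  assert (Hy : y ^ 2 <= r ^ 2) by nra.
  assert (Hx : - r <= x <= r) by (split; nra).
  assert (Hbeta : - (3 * r) <= beta <= 3 * r) by (split; nra).
  set (M := 7 * k * r / 2).
  assert (HA : Cmod A <= M).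
  { unfold Cmod, A, M; cbn [fst snd]. apply sqrt_le_of_le_sqr; [nra|].
    assert ((X - beta) ^ 2 <= 36 * r ^ 2) by (unfold X; nra).
    replace ((k / 2 * y) ^ 2 + (k / 2 * (X - beta)) ^ 2)
      with (k ^ 2 / 4 * (y ^ 2 + (X - beta) ^ 2)) by field.
    replace ((7 * k * r / 2) ^ 2) with (k ^ 2 / 4 * (49 * r ^ 2)) by field.
    apply Rmult_le_compat_l; nra. }
  assert (HB : Cmod B <= M).
  { unfold Cmod, B, M; cbn [fst snd]. apply sqrt_le_of_le_sqr; [nra|].
    assert ((X + beta) ^ 2 <= 36 * r ^ 2) by (unfold X; nra).
    replace ((- (k / 2) * y) ^ 2 + (k / 2 * (X + beta)) ^ 2)
      with (k ^ 2 / 4 * (y ^ 2 + (X + beta) ^ 2)) by field.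
    replace ((7 * k * r / 2) ^ 2) with (k ^ 2 / 4 * (49 * r ^ 2)) by field.
    apply Rmult_le_compat_l; nra. }
  eapply Rle_trans; [apply (Cmod_sum_root_angles_cexp_mult_le A B N M HN HA HB)|].
  apply Rmult_le_compat_l; [apply pos_INR|]. apply Rplus_le_compat.
  - apply exp_le_compat.
    cut (sqrt (Cmod A * Cmod B) <= 29 / 20 * k * r); [lra|].
    apply sqrt_le_of_le_sqr; [nra|].
    unfold Cmod. rewrite <- sqrt_mult by (apply Rplus_le_le_0_compat; apply pow2_ge_0).
    apply sqrt_le_of_le_sqr; [nra|].
    unfold A, B, X; cbn [fst snd].
    assert (P := shifted_dist_product_le x y r beta Hr Hd Hb).
    assert (0 < k ^ 4) by (apply pow_lt; lra).
    assert (0 < r ^ 4) by (apply pow_lt; lra).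
    replace ((k / 2 * y) ^ 2 + (k / 2 * (x - 2 * r - beta)) ^ 2)
      with (k ^ 2 / 4 * (y ^ 2 + (x - 2 * r - beta) ^ 2)) by field.
    replace ((- (k / 2) * y) ^ 2 + (k / 2 * (x - 2 * r + beta)) ^ 2)
      with (k ^ 2 / 4 * (y ^ 2 + (x - 2 * r + beta) ^ 2)) by field.
    replace (((29 / 20 * k * r) ^ 2) ^ 2) with (k ^ 4 / 16 * (r ^ 4 * (16 * (29 / 20) ^ 4)))
      by field.
    replace (k ^ 2 / 4 * (y ^ 2 + (x - 2 * r - beta) ^ 2)
             * (k ^ 2 / 4 * (y ^ 2 + (x - 2 * r + beta) ^ 2)))
      with (k ^ 4 / 16 * ((y ^ 2 + (x - 2 * r - beta) ^ 2) * (y ^ 2 + (x - 2 * r + beta) ^ 2)))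
      by field.
    apply Rmult_le_compat_l; nra.
  - assert (HM0 : 0 <= M) by (unfold M; nra).
    assert (HMN : 80 * M <= 7 * INR N) by (unfold M; lra).
    assert (Herr := pow_inv_fact_exp_le_1 M N HM0 HN HMN). lra.
Qed.

Lemma exists_INR_between (x : R) : 0 <= x -> exists n : nat, x <= INR n <= x + 1.
Proof.
  intros Hx. destruct (archimed x) as [H1 H2].
  assert (Hz : (0 <= up x)%Z) by (apply le_IZR; simpl; lra).
  exists (Z.to_nat (up x)). rewrite INR_IZR_INZ, Z2Nat.id by auto. lra.
Qed.

Lemma exp_margin_le (x Nr : R) : 0 <= x -> 0 < Nr <= 40 * x + 4 ->
  / 4800 * exp (x / 20) * (exp (29 / 10 * x) + 2) <= exp (3 * x) / (2 * Nr).
Proof.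
  intros Hx HNr.
  assert (E : exp (3 * x) = exp (x / 20) * exp (x / 20) * exp (29 / 10 * x))
    by (rewrite <- !exp_plus; f_equal; field).
  assert (He : 1 + x / 20 <= exp (x / 20)) by apply exp_ineq1_le.
  assert (Hf : 1 <= exp (29 / 10 * x)) by (rewrite <- exp_0; apply exp_le_compat; lra).
  rewrite E. apply Rmult_le_reg_r with (2 * Nr); [lra|].
  replace (exp (x / 20) * exp (x / 20) * exp (29 / 10 * x) / (2 * Nr) * (2 * Nr))
    with (exp (x / 20) * exp (x / 20) * exp (29 / 10 * x)) by (field; lra).
  assert (0 < exp (x / 20)) by apply exp_pos.
  assert (Hf3 : exp (29 / 10 * x) + 2 <= 3 * exp (29 / 10 * x)) by lra.
  assert (HNe : 2 * Nr <= 1600 * exp (x / 20)) by lra.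
  apply Rle_trans with (/ 4800 * exp (x / 20) * (3 * exp (29 / 10 * x)) * (1600 * exp (x / 20))).
  - apply Rmult_le_compat; try lra.
    + apply Rmult_le_pos; [apply Rmult_le_pos|]; lra.
    + apply Rmult_le_compat_l; lra.
  - lra.
Qed.

Section PeakedWave.
Variables k r : R.
Hypothesis Hk : 0 < k.
Hypothesis Hr : 0 < r.
Variable n : nat.
Hypothesis Hn : 10 * k * r <= INR n <= 10 * k * r + 1.

(* A multiple of 4, so that [root_angle N n = PI / 2]; [N >= 40 k r] makes the
   truncation error in [rsum_root_angles_small_on_disk] at most [2]. *)
Let N := (4 * n)%nat.

Lemma INR_nodes_bounds : 40 * k * r <= INR N <= 40 * k * r + 4.
Proof. unfold N. rewrite mult_INR. simpl INR. lra. Qed.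

Lemma nodes_pos : (0 < N)%nat.
Proof. unfold N. destruct n; [simpl in Hn; nra | lia]. Qed.

Definition peak_coef (j : nat) : R := cosh (k * (3 * r) * sin (root_angle N j)) / INR N.

(* Riemann sum for [(2 PI)^-1 \int cosh (3 k r sin t) cos (k ((x - 2 r) cos t + y sin t)) dt]. *)
Definition peaked_wave : R -> R -> R :=
  plane_waves N peak_coef (fun j => k * cos (root_angle N j)) (fun j => k * sin (root_angle N j))
    (fun j => - (2 * r) * k * cos (root_angle N j)).

Definition peak_value : R := rsum peak_coef N.

Lemma peak_coef_pos j : 0 < peak_coef j.
Proof.
  assert (0 < INR N) by (apply lt_0_INR, nodes_pos).
  unfold peak_coef, cosh. apply Rdiv_lt_0_compat; auto.
  assert (0 < exp (k * (3 * r) * sin (root_angle N j))) by apply exp_pos.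
  assert (0 < exp (- (k * (3 * r) * sin (root_angle N j)))) by apply exp_pos. lra.
Qed.

Lemma peaked_wave_helmholtz : helmholtz_sol k peaked_wave.
Proof.
  apply plane_waves_helmholtz. intros.
  rewrite !Rpow_mult_distr, <- Rmult_plus_distr_l, <- !Rsqr_pow2, Rplus_comm, sin2_cos2. ring.
Qed.

Lemma Rabs_peaked_wave_le x y : Rabs (peaked_wave x y) <= peak_value.
Proof.
  eapply Rle_trans; [apply Rabs_rsum_le|]. apply rsum_le; intros j _.
  rewrite Rabs_mult, (Rabs_pos_eq (peak_coef j)) by (left; apply peak_coef_pos).
  assert (Hcos := COS_bound (k * cos (root_angle N j) * x + k * sin (root_angle N j) * y
                             + - (2 * r) * k * cos (root_angle N j))).
  assert (H1 := peak_coef_pos j). apply Rabs_le in Hcos. nra.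
Qed.

Lemma peaked_wave_at_peak : peaked_wave (2 * r) 0 = peak_value.
Proof.
  apply rsum_ext; intros j _.
  replace (k * cos (root_angle N j) * (2 * r) + k * sin (root_angle N j) * 0
           + - (2 * r) * k * cos (root_angle N j)) with 0 by ring.
  rewrite cos_0; ring.
Qed.

Lemma peak_value_ge : exp (3 * k * r) / (2 * INR N) <= peak_value.
Proof.
  assert (HN : 0 < INR N) by (apply lt_0_INR, nodes_pos).
  eapply Rle_trans; [|apply (le_rsum_term peak_coef N n); [intros; left; apply peak_coef_pos|]].
  2:{ assert (H := nodes_pos). unfold N in *. lia. }
  unfold peak_coef. replace (root_angle N n) with (PI / 2).
  2:{ unfold root_angle, N. rewrite mult_INR. simpl INR.
      assert (0 < INR n) by (apply lt_0_INR; assert (H := nodes_pos); unfold N in H; lia).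
      field; lra. }
  rewrite sin_PI2, Rmult_1_r. unfold cosh.
  replace (k * (3 * r)) with (3 * k * r) by ring.
  assert (0 < exp (- (3 * k * r))) by apply exp_pos.
  apply Rmult_le_reg_r with (2 * INR N); [lra|].
  unfold Rdiv. field_simplify; lra.
Qed.

Lemma Rabs_peaked_wave_le_on_disk x y :
  x ^ 2 + y ^ 2 <= r ^ 2 -> Rabs (peaked_wave x y) <= exp (29 / 10 * k * r) + 2.
Proof.
  intros Hd. assert (HN := INR_nodes_bounds).
  assert (HNp : 0 < INR N) by (apply lt_0_INR, nodes_pos).
  set (V := fun beta => rsum (fun j => exp (k * beta * sin (root_angle N j))
              * cos (k * ((x - 2 * r) * cos (root_angle N j) + y * sin (root_angle N j)))) N).
  assert (E : peaked_wave x y = / (2 * INR N) * (V (3 * r) + V (- (3 * r)))).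
  { unfold peaked_wave, plane_waves, V. rewrite <- rsum_plus, <- rsum_scal.
    apply rsum_ext; intros j _. unfold peak_coef, cosh.
    replace (k * cos (root_angle N j) * x + k * sin (root_angle N j) * y
             + - (2 * r) * k * cos (root_angle N j))
      with (k * ((x - 2 * r) * cos (root_angle N j) + y * sin (root_angle N j))) by ring.
    replace (k * - (3 * r) * sin (root_angle N j)) with (- (k * (3 * r) * sin (root_angle N j)))
      by ring.
    field. lra. }
  assert (B1 := rsum_root_angles_small_on_disk k r N x y (3 * r) Hk Hr Hd
                  ltac:(ring) ltac:(lra)).
  assert (B2 := rsum_root_angles_small_on_disk k r N x y (- (3 * r)) Hk Hr Hd
                  ltac:(ring) ltac:(lra)).
  fold (V (3 * r)) in B1. fold (V (- (3 * r))) in B2.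
  rewrite E, Rabs_mult, Rabs_pos_eq by (left; apply Rinv_0_lt_compat; lra).
  assert (Rabs (V (3 * r) + V (- (3 * r))) <= 2 * INR N * (exp (29 / 10 * k * r) + 2))
    by (eapply Rle_trans; [apply Rabs_triang | lra]).
  apply Rmult_le_reg_l with (2 * INR N); [lra|].
  rewrite <- Rmult_assoc, Rinv_r, Rmult_1_l by lra. lra.
Qed.

Lemma peaked_wave_Mu :
  0 < Mu peaked_wave (2 * r) /\ Mu peaked_wave (4 * r) <= Mu peaked_wave (2 * r) /\
  / 4800 * exp (k * r / 20) * Mu peaked_wave r <= Mu peaked_wave (2 * r).
Proof.
  assert (HN := INR_nodes_bounds).
  assert (Hbound : forall x y, x ^ 2 + y ^ 2 <= (2 * r) ^ 2 ->
                     Rabs (peaked_wave x y) <= peak_value)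
    by (intros; apply Rabs_peaked_wave_le).
  assert (HM2 : peak_value <= Mu peaked_wave (2 * r)).
  { rewrite <- peaked_wave_at_peak at 1.
    eapply Rle_trans; [apply Rle_abs | apply (le_Mu _ _ _ _ _ Hbound); nra]. }
  assert (HS := peak_value_ge).
  assert (HNp : 0 < INR N) by (apply lt_0_INR, nodes_pos).
  assert (0 < exp (3 * k * r) / (2 * INR N)) by (apply Rdiv_lt_0_compat; [apply exp_pos | lra]).
  repeat split.
  - lra.
  - eapply Rle_trans; [|exact HM2]. apply Mu_le; intros; apply Rabs_peaked_wave_le.
  - assert (HM1 : Mu peaked_wave r <= exp (29 / 10 * k * r) + 2)
      by (apply Mu_le, Rabs_peaked_wave_le_on_disk).
    assert (Hmargin := exp_margin_le (k * r) (INR N) ltac:(nra) ltac:(lra)).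
    replace (29 / 10 * (k * r)) with (29 / 10 * k * r) in Hmargin by ring.
    replace (3 * (k * r)) with (3 * k * r) in Hmargin by ring.
    assert (0 < / 4800 * exp (k * r / 20)) by (apply Rmult_lt_0_compat; [lra | apply exp_pos]).
    assert (/ 4800 * exp (k * r / 20) * Mu peaked_wave r
            <= / 4800 * exp (k * r / 20) * (exp (29 / 10 * k * r) + 2))
      by (apply Rmult_le_compat_l; lra).
    lra.
Qed.

End PeakedWave.

Lemma helmholtz_peaked_solution k r : 0 < k -> 0 < r ->
  exists u, helmholtz_sol k u /\ 0 < Mu u (2 * r) /\ Mu u (4 * r) <= Mu u (2 * r) /\
            / 4800 * exp (k * r / 20) * Mu u r <= Mu u (2 * r).
Proof.
  intros Hk Hr. destruct (exists_INR_between (10 * k * r)) as [n Hn]; [nra|].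
  exists (peaked_wave k r n). split.
  - now apply peaked_wave_helmholtz.
  - now apply peaked_wave_Mu.
Qed.

(** * The three-ball constant *)

Lemma Rpower_le_of_three_balls (a q C M1 M2 M4 : R) :
  0 < a < 1 -> 0 < q -> 0 < M2 -> M4 <= M2 -> q * M1 <= M2 ->
  M2 <= C * rpow M1 a * rpow M4 (1 - a) -> Rpower q a <= C.
Proof.
  intros Ha Hq HM2 H42 H12 Hthree. unfold rpow in Hthree.
  destruct (Rle_dec M1 0) as [|HM1]; [rewrite Rmult_0_r, Rmult_0_l in Hthree; lra|].
  destruct (Rle_dec M4 0) as [|HM4]; [rewrite Rmult_0_r in Hthree; lra|].
  apply Rnot_le_lt in HM1, HM4.
  assert (P1 : 0 < Rpower M1 a) by apply exp_pos.
  assert (P4 : 0 < Rpower M4 (1 - a)) by apply exp_pos.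
  assert (HC : 0 < C).
  { destruct (Rle_or_lt C 0); auto.
    assert (C * Rpower M1 a * Rpower M4 (1 - a) <= 0); [|lra].
    rewrite Rmult_assoc. apply Rmult_le_0_r; auto. left; now apply Rmult_lt_0_compat. }
  assert (Hq1 : Rpower q a * Rpower M1 a <= Rpower M2 a).
  { rewrite Rpower_mult_distr by lra.
    apply Rle_Rpower_l; [lra | split; [now apply Rmult_lt_0_compat | lra]]. }
  assert (H4 : Rpower M4 (1 - a) <= Rpower M2 (1 - a)) by (apply Rle_Rpower_l; lra).
  assert (Hsplit : Rpower M2 a * Rpower M2 (1 - a) = M2)
    by (rewrite <- Rpower_plus, Rplus_minus, Rpower_1; lra).
  assert (0 < Rpower q a) by apply exp_pos.
  apply Rmult_le_reg_r with M2; auto.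
  rewrite <- Hsplit at 2.
  apply Rle_trans with (Rpower q a * (C * Rpower M1 a * Rpower M4 (1 - a))).
  - apply Rmult_le_compat_l; lra.
  - replace (Rpower q a * (C * Rpower M1 a * Rpower M4 (1 - a)))
      with (C * (Rpower q a * Rpower M1 a) * Rpower M4 (1 - a)) by ring.
    apply Rle_trans with (C * Rpower M2 a * Rpower M4 (1 - a)).
    + apply Rmult_le_compat_r; [lra|]. apply Rmult_le_compat_l; lra.
    + rewrite Rmult_assoc. apply Rmult_le_compat_l; [lra|].
      apply Rmult_le_compat_l; [left; apply exp_pos | exact H4].
Qed.

Lemma le_Rpower_mult_exp (c x a : R) : 0 < c <= 1 -> 0 <= a <= 1 ->
  c * exp (a * x) <= Rpower (c * exp x) a.
Proof.
  intros Hc Ha. rewrite <- Rpower_mult_distr by (lra || apply exp_pos).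
  unfold Rpower at 2. rewrite ln_exp.
  apply Rmult_le_compat_r; [left; apply exp_pos|].
  unfold Rpower. rewrite <- (exp_ln c) at 1 by lra. apply exp_le_compat.
  assert (ln c <= 0) by (rewrite <- ln_1; apply ln_le; lra). nra.
Qed.

Theorem mainTheorem2 :
  exists c d : R, 0 < c /\ 0 < d /\
    forall alpha k r C : R,
      0 < alpha < 1 -> 0 < k -> 0 < r ->
      (forall u : R -> R -> R, helmholtz_sol k u ->
         Mu u (2 * r) <= C * rpow (Mu u r) alpha * rpow (Mu u (4 * r)) (1 - alpha)) ->
      c * exp (d * alpha * k * r) <= C.
Proof.
  exists (/ 4800), (/ 20). split; [lra|]. split; [lra|].
  intros alpha k r C Halpha Hk Hr Hthree.
  destruct (helmholtz_peaked_solution k r Hk Hr) as (u & Hu & HM2 & H42 & H12).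
  apply Rle_trans with (Rpower (/ 4800 * exp (k * r / 20)) alpha).
  - replace (/ 20 * alpha * k * r) with (alpha * (k * r / 20)) by field.
    apply le_Rpower_mult_exp; lra.
  - apply (Rpower_le_of_three_balls alpha _ C (Mu u r) (Mu u (2 * r)) (Mu u (4 * r))); auto.
    apply Rmult_lt_0_compat; [lra | apply exp_pos].
Qed.
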